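(* Assume $2\pi/N\le\underline w$. There exists $C>0$ (independent of $\epsilon$) such that for every $\epsilon\in(0,\tfrac12]$ there exists a ReLU FNO $\mathcal{N}^{\mathrm{FNO}}$ on the grid of size $N$, with constant (in $x$) output, $k_{\max}=0$, $d_v\le C$ and depth $\le C\log(\epsilon^{-1})^2$, such that \[ \sup_{h,w,\xi}\big|\mathcal{N}^{\mathrm{FNO}}(\bar u)(x)-h\big|\le\epsilon\quad\text{for all }x, \] where $\bar u=h\,1_{[-w/2,w/2]}(\cdot-\xi)$ and the supremum is over $h\in[\underline h,\overline h]$, $w\in[\underline w,\overline w]$, $\xi\in[0,2\pi]$.
   Context: $\mathbb{T}=\mathbb{R}/2\pi\mathbb{Z}$; fixed $0<\underline h\le\overline h$, $0<\underline w\le\overline w<2\pi$; $1_{[-w/2,w/2]}$ periodized. FNO with grid size $N$: $x_j=2\pi j/N$, $\mathcal{F}_Nv(k)=\frac1N\sum_{j=1}^Nv(x_j)e^{-ikx_j}$; an FNO with lifting dimension $d_v$, cut-off $k_{\max}$, depth $L$, ReLU $\sigma$ is $Q\circ\mathcal{L}_L\circ\dots\circ\mathcal{L}_1\circ R$, $(R\bar u)(x)=R(\bar u(x),x)$ ($R$ a shallow ReLU network into $\mathbb{R}^{d_v}$), $(\mathcal{L}_\ell v)(x)=\sigma(W_\ell v(x)+b_\ell(x)+\sum_{|k|\le k_{\max}}P_\ell(k)\mathcal{F}_Nv(k)e^{ikx})$ with $W_\ell\in\mathbb{R}^{d_v\times d_v}$, $P_\ell(k)\in\mathbb{C}^{d_v\times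 d_v}$, real bias $b_\ell(x)=\sum_{|k|\le k_{\max}}\hat b_\ell(k)e^{ikx}$, $Q$ linear pointwise. Depth $=L$. *)

From mathcomp Require Import all_boot all_order all_algebra all_classical all_reals all_analysis.
From mathcomp Require Import complex.
From Stdlib Require List.
Set Implicit Arguments. Unset Strict Implicit. Unset Printing Implicit Defensive.
Import Order.TTheory GRing.Theory Num.Theory.
Local Open Scope ring_scope.

Section FNO.
Variable R : realType.

Definition relu (x : R) : R := Num.max x 0.
Definition relu_v n (v : 'cV[R]_n) : 'cV[R]_n := map_mx relu v.

Definition cR (x : R) : R[i] := Complex x 0.
Definition cRv n (v : 'cV[R]_n) : 'cV[R[i]]_n := map_mx cR v.
Definition reV n (v : 'cV[R[i]]_n) : 'cV[R]_n := map_mx (fun z : R[i] => complex.Re z) v.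

Definition cexp (k : int) (x : R) : R[i] :=
  Complex (cos (k%:~R * x)) (sin (k%:~R * x)).

(** grid points x_j = 2 pi j / N, j = 1..N (j : 'I_N stands for j+1) *)
Definition gridpt (N : nat) (j : 'I_N) : R := 2 * pi * (j.+1)%:R / N%:R.

Definition dft (N dv : nat) (v : R -> 'cV[R]_dv) (k : int) : 'cV[R[i]]_dv :=
  (cR (N%:R)^-1) *: \sum_(j < N) (cexp (- k) (gridpt j) *: cRv (v (gridpt j))).

(** the integers k with |k| <= K, enumerated as i - K for i < 2K+1 *)
Definition fidx (K : nat) (i : 'I_(2 * K).+1) : int := (i : int) - (K : int).

Record Lifting (dv : nat) := {
  lift_width : nat;
  lift_A1 : 'M[R]_(lift_width, 2);
  lift_c1 : 'cV[R]_lift_width;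
  lift_A2 : 'M[R]_(dv, lift_width);
  lift_c2 : 'cV[R]_dv }.

Definition lift_eval dv (L : Lifting dv) (y x : R) : 'cV[R]_dv :=
  lift_A2 L *m relu_v (lift_A1 L *m (\col_(i < 2) (if i == 0 :> nat then y else x))
                        + lift_c1 L) + lift_c2 L.

(** Fourier layer: W, P(k) (complex matrices), bias coefficients \hat b(k) *)
Record FLayer (dv : nat) := {
  lay_W : 'M[R]_dv;
  lay_P : int -> 'M[R[i]]_dv;
  lay_bh : int -> 'cV[R[i]]_dv }.

(** The bias and the spectral term are real under the Hermitian symmetry
   imposed in [fno_valid]; Re only casts them to real vectors. *)
Definition layer_eval (N K dv : nat) (l : FLayer dv) (v : R -> 'cV[R]_dv) (x : R)
  : 'cV[R]_dv :=
  relu_v (lay_W l *m v x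
          + reV (\sum_(i < (2 * K).+1) (cexp (fidx i) x *: lay_bh l (fidx i)))
          + reV (\sum_(i < (2 * K).+1)
                   (cexp (fidx i) x *: (lay_P l (fidx i) *m dft N v (fidx i))))).

Record FNO := {
  fno_dv : nat;
  fno_kmax : nat;
  fno_lift : Lifting fno_dv;
  fno_layers : seq (FLayer fno_dv);
  fno_Q : 'M[R]_(1, fno_dv) }.

Definition fno_depth (F : FNO) : nat := size (fno_layers F).

(** realness (Hermitian symmetry) of P_l(k) and \hat b_l(k) for |k| <= kmax *)
Definition fno_valid (F : FNO) : Prop :=
  forall l, Stdlib.Lists.List.In l (fno_layers F) -> forall i : 'I_(2 * fno_kmax F).+1,
    lay_P l (- fidx i) = map_mx conjc (lay_P l (fidx i)) /\
    lay_bh l (- fidx i) = map_mx conjc (lay_bh l (fidx i)).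

Definition fno_eval (N : nat) (F : FNO) (u : R -> R) : R -> R :=
  fun x =>
    (fno_Q F *m
      (foldl (fun v l => layer_eval N (fno_kmax F) l v)
             (fun y => lift_eval (fno_lift F) (u y) y) (fno_layers F)) x) 0 0.

Definition pbox (h w xi : R) (x : R) : R :=
  if `[< exists m : int, `|x - xi - 2 * pi * m%:~R| <= w / 2 >] then h else 0.

End FNO.

From mathcomp Require Import all_boot all_order all_algebra all_classical all_reals all_analysis.
From mathcomp Require Import complex.
From mathcomp Require Import ring lra.
(* The network is exact.  Channel k of the
   lifting is relu (y - N hhi (x - 2 pi k / N)); at a grid point x_i and an
   input value y in [0, hhi] it is y plus a known constant when x_i lies left
   of 2 pi k / N and 0 otherwise.  So the grid average of channel k is, up to
   a known constant, the partial sum T_k of the first k grid values, and the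
   layer outputs relu (u(x_j) - T_j) = relu (T_(j+1) - 2 T_j).  For an input
   taking only the values 0 and h these terms add up to h as soon as some
   grid point lies in the box, which a grid of spacing 2 pi / N <= w ensures. *)

Set Implicit Arguments. Unset Strict Implicit. Unset Printing Implicit Defensive.
Import Order.TTheory GRing.Theory Num.Theory.
Local Open Scope ring_scope.

Section RealFacts.
Variable R : realType.

Lemma relu_id (x : R) : 0 <= x -> relu x = x.
Proof. by move=> x0; rewrite /relu max_l. Qed.

Lemma relu_eq0 (x : R) : x <= 0 -> relu x = 0.
Proof. by move=> x0; rewrite /relu max_r. Qed.

Lemma first_hit_relu_sum (a : R) (A : nat -> R) (n : nat) :
  0 <= a -> (forall i, A i = 0 \/ A i = a) -> (exists2 k, (k < n)%N & A k = a) ->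
  \sum_(j < n) relu (A j - \sum_(i < j) A i) = a.
Proof.
move=> a0 A0a [k kn Ak].
pose S m := \sum_(j < m) relu (A j - \sum_(i < j) A i).
have dichotomy m : (\sum_(i < m) A i = 0 /\ S m = 0) \/ (a <= \sum_(i < m) A i /\ S m = a).
  elim: m => [|m [[T0 S0]|[Ta Sa]]]; first by left; rewrite /S !big_ord0.
  - rewrite /S !big_ord_recr /= -/(S m) T0 S0 subr0 !add0r.
    by case: (A0a m) => ->; rewrite relu_id //; [left|right].
  - rewrite /S !big_ord_recr /= -/(S m) Sa relu_eq0 ?addr0; last first.
      by case: (A0a m) => ->; lra.
    by right; split=> //; case: (A0a m) => ->; lra.
case: (dichotomy n) => [[T0 S0]|[_ //]].
have : A k <= \sum_(i < n) A i.
  rewrite (bigD1 (Ordinal kn)) //= lerDl sumr_ge0 // => i _.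
  by case: (A0a i) => ->.
by rewrite /S in S0; rewrite S0 T0 Ak => a_le0; apply/eqP; rewrite eq_le a0 a_le0.
Qed.

Lemma sum_ord_delta n t (f : nat -> R) : (t < n)%N ->
  \sum_(k < n) (k == t :> nat)%:R * f k = f t.
Proof.
move=> tn; rewrite (bigD1 (Ordinal tn)) //= eqxx mul1r big1 ?addr0 // => k.
by rewrite -val_eqE /= => /negbTE ->; rewrite mul0r.
Qed.

Lemma grid_point_near (N : nat) (w xi : R) : (0 < N)%N -> 2 * pi / N%:R <= w ->
  exists (k : 'I_N) (m : int), `|gridpt R k - xi - 2 * pi * m%:~R| <= w / 2.
Proof.
move=> N_gt0 Dw; set D := 2 * pi / N%:R in Dw.
have N0 : (0 : R) < N%:R by rewrite ltr0n.
have D_gt0 : 0 < D by rewrite divr_gt0 // mulr_gt0 // pi_gt0.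
have ND : N%:R * D = 2 * pi by rewrite mulrC divfK ?gt_eqF.
pose t := Num.ceil ((xi - w / 2) / D).
have t_ge : xi - w / 2 <= t%:~R * D by rewrite -ler_pdivrMr // ceil_ge.
have t_lt : (t%:~R - 1) * D < xi - w / 2.
  by rewrite -ltr_pdivlMr // -[1]/(1%:~R) -intrB ceilB1_lt.
pose r := ((t - 1) %% N)%Z; pose m := ((t - 1) %/ N)%Z.
have tE : t = m * N + r + 1 by rewrite /m /r -divz_eq subrK.
have r_ge0 : 0 <= r by apply: modz_ge0; rewrite -lt0n.
have r_lt : (`|r| < N)%N by rewrite -ltz_nat gez0_abs // ltz_pmod // ltz_nat.
clearbody r m; exists (Ordinal r_lt), (- m).
have gridE : gridpt R (Ordinal r_lt) - 2 * pi * (- m)%:~R = t%:~R * D.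
  have rE : (`|r|.+1%:R : R) = r%:~R + 1 by rewrite -natr1 natr_absz ger0_norm.
  have tR : t%:~R = m%:~R * N%:R + r%:~R + 1 :> R by rewrite tE !intrD intrM.
  rewrite /gridpt /= rE tR mulrNz /D; field.
  by rewrite pnatr_eq0 -lt0n.
rewrite ler_norml; apply/andP; split; lra.
Qed.
End RealFacts.

Section MeanLayer.
Variables (R : realType) (dv : nat).

Definition mean_layer (W P : 'M[R]_dv) (b : 'cV[R]_dv) : FLayer R dv :=
  {| lay_W := W; lay_P := fun _ => map_mx (@cR R) P; lay_bh := fun _ => cRv b |}.

Lemma cR_real_complex : @cR R = real_complex R.
Proof. by apply/funext. Qed.

Lemma reV_cRv (v : 'cV[R]_dv) : reV (cRv v) = v.
Proof. by apply/matrixP=> i j; rewrite !mxE. Qed.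

Lemma layer_eval_mean_layer N W P b (v : R -> 'cV[R]_dv) x :
  layer_eval N 0 (mean_layer W P b) v x =
  relu_v (W *m v x + b + P *m (N%:R^-1 *: \sum_(j < N) v (gridpt R j))).
Proof.
have cexp0 y : cexp 0 y = 1 by rewrite /cexp mul0r cos0 sin0.
rewrite /layer_eval /dft /= !big_ord1 /fidx /= oppr0 !cexp0 !scale1r reV_cRv.
under eq_bigr do rewrite cexp0 scale1r.
rewrite /cRv cR_real_complex -(map_mx_sum (real_complex R)) -map_mxZ -map_mxM.
by congr (relu_v (_ + _)); apply/matrixP=> i j; rewrite !mxE.
Qed.

Lemma mean_layer_hermitian W P b (k : int) :
  lay_P (mean_layer W P b) (- k) = map_mx conjc (lay_P (mean_layer W P b) k) /\
  lay_bh (mean_layer W P b) (- k) = map_mx conjc (lay_bh (mean_layer W P b) k).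
Proof. by split; apply/matrixP=> i j; rewrite !mxE /cR /= oppr0. Qed.

End MeanLayer.

Section BoxDetector.
Variables (R : realType) (N : nat) (hhi : R).
Hypotheses (N_gt0 : (0 < N)%N) (hhi_ge0 : 0 <= hhi).

(* [knot i.+1] is the grid point [gridpt R i]. *)
Definition knot (k : nat) : R := 2 * pi * k%:R / N%:R.
Definition slope : R := N%:R * hhi.

Definition mask_sum (u : R -> R) (k : nat) : R :=
  \sum_(i < N) relu (u (knot i.+1) - slope * (knot i.+1 - knot k)).

Lemma mask_sum_split (u : R -> R) (k : nat) : (k <= N)%N ->
  (forall i : 'I_N, 0 <= u (knot i.+1) <= hhi) ->
  mask_sum u k = \sum_(i < k) u (knot i.+1) + mask_sum (fun=> 0) k.
Proof.
move=> kN u_bd; rewrite (big_ord_widen _ (fun i => u (knot i.+1)) kN) big_mkcond.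
rewrite /mask_sum -big_split; apply: eq_bigr => i _ /=.
have slopeE : slope * (knot i.+1 - knot k) = 2 * pi * hhi * (i.+1%:R - k%:R).
  by rewrite /slope /knot; field; rewrite pnatr_eq0 -lt0n.
have pi_ge2 := pi_ge2 R; have /andP[u_ge0 u_le] := u_bd i.
have hhi_le : hhi <= 2 * pi * hhi by rewrite ler_peMl //; lra.
rewrite slopeE; case: ltnP => [ik | ki].
- have : 2 * pi * hhi * (i.+1%:R - k%:R) <= 0.
    by rewrite mulr_ge0_le0 ?mulr_ge0 // ?subr_le0 ?ler_nat //; lra.
  by move=> le0; rewrite !relu_id //; lra.
- have : 2 * pi * hhi <= 2 * pi * hhi * (i.+1%:R - k%:R).
    by rewrite ler_peMr ?mulr_ge0 // ?lerBrDl ?natr1 ?ler_nat //; lra.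
  by move=> ge; rewrite !relu_eq0 //; lra.
Qed.

Definition mask_lift : Lifting R N.+1 :=
  {| lift_width := N.+1;
     lift_A1 := \matrix_(k < N.+1, c < 2) (if c == 0 :> nat then 1 else - slope);
     lift_c1 := \col_(k < N.+1) (slope * knot k);
     lift_A2 := 1%:M; lift_c2 := 0 |}.

Lemma mask_lift_eval y x (k : 'I_N.+1) :
  lift_eval mask_lift y x k 0 = relu (y - slope * (x - knot k)).
Proof.
rewrite /lift_eval /= mul1mx addr0 !mxE big_ord_recr big_ord1 /= !mxE /=.
by congr relu; ring.
Qed.

Definition diff_P : 'M[R]_N.+1 := \matrix_(j < N.+1, k < N.+1)
  (if (j < N)%N then N%:R * ((k == j.+1 :> nat)%:R - 2 * (k == j :> nat)%:R) else 0).

Definition diff_b : 'cV[R]_N.+1 := \col_(j < N.+1)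
  (if (j < N)%N then 2 * mask_sum (fun=> 0) j - mask_sum (fun=> 0) j.+1 else 0).

Definition box_detector : FNO R :=
  {| fno_dv := N.+1; fno_kmax := 0; fno_lift := mask_lift;
     fno_layers := [:: mean_layer 0 diff_P diff_b]; fno_Q := const_mx 1 |}.

Lemma diff_P_col (f : nat -> R) (j : 'I_N.+1) :
  (diff_P *m \col_(k < N.+1) f k) j 0 = if (j < N)%N then N%:R * (f j.+1 - 2 * f j) else 0.
Proof.
rewrite !mxE; case: ifP => jN; last by rewrite big1 // => k _; rewrite !mxE jN mul0r.
rewrite (eq_bigr (fun k : 'I_N.+1 => N%:R * ((k == j.+1 :> nat)%:R * f k)
                  - N%:R * 2 * ((k == j :> nat)%:R * f k))); last first.
  by move=> k _; rewrite !mxE jN; ring.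
by rewrite sumrB -!mulr_sumr !sum_ord_delta // ?ltnS ?ltnW //; ring.
Qed.

Lemma box_detector_const (u : R -> R) x y :
  fno_eval N box_detector u x = fno_eval N box_detector u y.
Proof. by rewrite /fno_eval /= !layer_eval_mean_layer !mul0mx. Qed.

Lemma box_detector_eval (u : R -> R) x : (forall i : 'I_N, 0 <= u (knot i.+1) <= hhi) ->
  fno_eval N box_detector u x =
  \sum_(j < N) relu (u (knot j.+1) - \sum_(i < j) u (knot i.+1)).
Proof.
move=> u_bd.
have meanE : N%:R^-1 *: \sum_(i < N) lift_eval mask_lift (u (gridpt R i)) (gridpt R i)
    = \col_(k < N.+1) (N%:R^-1 * mask_sum u k).
  apply/matrixP=> k c; rewrite (ord1 c) !mxE summxE; congr (_ * _).
  by apply: eq_bigr => i _; exact: mask_lift_eval.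
have entryE (j : 'I_N.+1) :
    relu_v (diff_b + diff_P *m \col_(k < N.+1) (N%:R^-1 * mask_sum u k)) j 0 =
    relu (if (j < N)%N then u (knot j.+1) - \sum_(i < j) u (knot i.+1) else 0).
  rewrite mxE [in LHS]mxE (diff_P_col (fun k => N%:R^-1 * mask_sum u k)) mxE.
  case: ifP => jN; last by rewrite addr0.
  rewrite (mask_sum_split jN u_bd) (mask_sum_split (ltnW jN) u_bd) big_ord_recr /=.
  by congr relu; field; rewrite pnatr_eq0 -lt0n.
rewrite /fno_eval /= layer_eval_mean_layer mul0mx add0r meanE mxE.
transitivity (\sum_(j < N.+1)
    relu (if (j < N)%N then u (knot j.+1) - \sum_(i < j) u (knot i.+1) else 0)).
  by apply: eq_bigr => j _; rewrite mxE entryE mul1r.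
rewrite big_ord_recr /= ltnn relu_id // addr0.
by apply: eq_bigr => j _; rewrite ltn_ord.
Qed.
End BoxDetector.

Lemma ln_inv_sqr_ge_ln2_sqr (R : realType) (eps : R) : 0 < eps -> eps <= 1 / 2 ->
  1 <= ln 2 ^- 2 * ln eps^-1 ^+ 2.
Proof.
move=> eps_gt0 eps_le.
have ln2_gt0 : 0 < ln (2 : R) by rewrite ln_gt0 // ltr1n.
have ln_ge : ln 2 <= ln eps^-1.
  rewrite ler_ln ?posrE ?invr_gt0 // -[2]invrK lef_pV2 ?posrE ?invr_gt0 //; lra.
rewrite ler_pdivlMl ?exprn_gt0 // mulr1 lerXn2r ?nnegrE //; lra.
Qed.

Theorem mainTheorem14 (R : realType) (N : nat) (hlo hhi wlo whi : R) :
  (0 < N)%N ->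
  0 < hlo -> hlo <= hhi -> 0 < wlo -> wlo <= whi -> whi < 2 * pi ->
  2 * pi / N%:R <= wlo ->
  exists C : R, 0 < C /\
    forall eps : R, 0 < eps -> eps <= 1 / 2 ->
      exists F : FNO R,
        fno_valid F /\ fno_kmax F = 0%N /\
        (fno_dv F)%:R <= C /\
        (fno_depth F)%:R <= C * (ln (eps^-1)) ^+ 2 /\
        (forall (u : R -> R) (x y : R), 0 < x <= 2 * pi -> 0 < y <= 2 * pi ->
           fno_eval N F u x = fno_eval N F u y) /\
        (forall h w xi : R, hlo <= h <= hhi -> wlo <= w <= whi -> 0 <= xi <= 2 * pi ->
           forall x : R, 0 < x <= 2 * pi ->
             `|fno_eval N F (pbox h w xi) x - h| <= eps).
Proof.
move=> N_gt0 hlo_gt0 hlo_le_hhi _ _ _ grid_le_wlo.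
have ln2_gt0 : 0 < ln (2 : R) by rewrite ln_gt0 // ltr1n.
have c_ge0 : 0 <= ln 2 ^- 2 :> R by rewrite invr_ge0 exprn_ge0 // ltW.
exists (N.+1%:R + ln 2 ^- 2); split; first by rewrite ltr_wpDr // ltr0Sn.
move=> eps eps_gt0 eps_le; exists (box_detector N hhi).
split; first by move=> l [<-|[]] i; exact: mean_layer_hermitian.
split=> //; split; first by rewrite /= lerDl.
split.
  apply: le_trans (ln_inv_sqr_ge_ln2_sqr eps_gt0 eps_le) _.
  by rewrite /fno_depth /= mulrDl lerDr mulr_ge0 ?sqr_ge0.
split; first by move=> u x y _ _; exact: box_detector_const.
move=> h w xi /andP[hlo_le_h h_le_hhi] /andP[wlo_le_w _] _ x _.
have pbox0h y : pbox h w xi y = 0 \/ pbox h w xi y = h.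
  by rewrite /pbox; case: ifP => _; [right | left].
have hhi_ge0 : 0 <= hhi by lra.
rewrite box_detector_eval //; last first.
  by move=> i; case: (pbox0h (knot R N i.+1)) => ->; apply/andP; split; lra.
have [k [m near]] := grid_point_near xi N_gt0 (le_trans grid_le_wlo wlo_le_w).
rewrite (first_hit_relu_sum (A := fun j => pbox h w xi (knot R N j.+1)) (a := h)) //.
- by rewrite subrr normr0 ltW.
- lra.
- by exists k => //; rewrite /pbox asboolT //; exists m.
Qed.
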